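(* Let $\mathcal{D}$ be a small category, $X:\mathcal{D}\to\mathbf{Set}_*$ a diagram of pointed sets, $A$ an abelian group and $\rho:(\lim_\mathcal{D}X)\wedge A\to\lim_\mathcal{D}(X\wedge A)$ the natural map. Then: (1) If $A$ is $m$-bounded ($mA=0$) then $\ker\rho$ and $\mathrm{coker}\,\rho$ are $m$-bounded. (2) If $A$ is uniquely divisible then $\ker\rho$ and $\mathrm{coker}\,\rho$ are uniquely divisible. (3) If $A$ is almost uniquely divisible then $\ker\rho$ and $\mathrm{coker}\,\rho$ are almost uniquely divisible (in particular cotorsion).
   Context: For a pointed set $Y$ (base point $*$) and abelian group $A$, $Y\wedge A:=\bigoplus_{Y\setminus\{*\}}A$; its elements are pointed maps $y:Y\to A$ with finite support. For $s\in Y$, $v\in A$, $sv$ denotes the element with value $v$ at $s$ and $0$ elsewhere ($*v=0$). A pointed map $f:Y\to Z$ induces $f_*:Y\wedge A\to Z\wedge A$, $f_*(sv)=f(s)v$. The natural map $\rho$ satisfies $\rho(xv)(d)=x(d)v$ for $x\in\lim_\mathcal{D}X$, $v\in A$, $d\in\mathcal{D}$. An abelian group is almost uniquely divisible if it is the direct sum of a uniquely divisible group and a bounded group. A group $C$ is cotorsion if $\mathrm{Ext}(\mathbb{Q},C)=0$. *)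

From HB Require Import structures.
From mathcomp Require Import all_boot all_order all_algebra.
From mathcomp Require Import boolp classical_sets functions.
From Stdlib Require List.
Set Implicit Arguments. Unset Strict Implicit. Unset Printing Implicit Defensive.
Import Order.TTheory GRing.Theory.
Local Open Scope ring_scope.

Record category := Category {
  Obj :> Type;
  Hom : Obj -> Obj -> Type;
  idm : forall a, Hom a a;
  comp : forall a b e, Hom b e -> Hom a b -> Hom a e;
  comp1m : forall a b (f : Hom a b), comp (idm b) f = f;
  compm1 : forall a b (f : Hom a b), comp f (idm a) = f;
  compA : forall a b e e' (h : Hom e e') (g : Hom b e) (f : Hom a b),
      comp h (comp g f) = comp (comp h g) f }.
Arguments idm {c} a.
Arguments comp {c a b e} _ _.

Record pdiagram (C : category) := PDiagram {
  ob :> Obj C -> Type;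
  pt : forall d, ob d;
  fmap : forall d d', Hom d d' -> ob d -> ob d';
  fmap_pt : forall d d' (f : Hom d d'), fmap f (pt d) = pt d';
  fmap_id : forall d (x : ob d), fmap (idm d) x = x;
  fmap_comp : forall a b e (g : Hom b e) (f : Hom a b) (x : ob a),
      fmap (comp g f) x = fmap g (fmap f x) }.
Arguments pt {C} X d : rename.
Arguments fmap {C} X {d d'} f x : rename.

Section Smash.
Variables (C : category) (X : pdiagram C) (A : zmodType).

(* families x = (x_d)_d ; the compatible ones form lim_D X *)
Definition lfamily := forall d : Obj C, X d.
Definition compatible (x : lfamily) :=
  forall d d' (f : Hom d d'), fmap X f (x d) = x d'.
Definition basefam : lfamily := fun d => pt X d.

Definition fin_supp (T : Type) (u : T -> A) :=
  exists s : list T, forall t, u t != 0 -> List.In t s.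
Definition covers (T : Type) (u : T -> A) (s : list T) :=
  List.NoDup s /\ forall t, u t != 0 -> List.In t s.

(* (lim_D X) /\ A : finitely supported pointed maps lim_D X -> A, encoded as
   maps on all families that vanish off compatible families. *)
Definition limsmash (u : lfamily -> A) :=
  [/\ u basefam = 0, (forall x, u x != 0 -> compatible x) & fin_supp u].

(* lim_D (X /\ A): a lfamily (w_d)_d, w_d in X d /\ A, encoded uncurried as
   w : {d & X d} -> A, compatible with the induced maps f_*. *)
Definition fam_smash := {d : Obj C & X d} -> A.
Definition comp_d (w : fam_smash) d : X d -> A := fun p => w (existT _ d p).
Arguments comp_d w d : clear implicits.

Definition pushes d d' (f : Hom d d') (y : X d -> A) (z : X d' -> A) :=
  z (pt X d') = 0 /\
  forall p' : X d', p' <> pt X d' ->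
    forall s, covers y s -> z p' = \sum_(p <- s | `[< fmap X f p = p' >]) y p.

Definition limXA (w : fam_smash) :=
  (forall d, comp_d w d (pt X d) = 0 /\ fin_supp (comp_d w d)) /\
  (forall d d' (f : Hom d d'), pushes f (comp_d w d) (comp_d w d')).

(* the natural map rho : (lim X) /\ A -> lim (X /\ A), as its graph:
   rho(u)_d = sum_x u(x) . x_d  (determined by rho(x v)(d) = x(d) v). *)
Definition rho_graph (u : lfamily -> A) (w : fam_smash) :=
  forall d, comp_d w d (pt X d) = 0 /\
    forall p : X d, p <> pt X d ->
      forall s, covers u s -> w (existT _ d p) = \sum_(x <- s | `[< x d = p >]) u x.

Definition ker_rho (u : lfamily -> A) := limsmash u /\ rho_graph u (fun _ => 0).
Definition im_rho (w : fam_smash) := exists u, limsmash u /\ rho_graph u w.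
End Smash.

Section Subquotient.
Variable G : zmodType.
Definition subgroup (S : G -> Prop) := S 0 /\ forall x y, S x -> S y -> S (x - y).

Definition sq_bounded (m : nat) (K H : G -> Prop) := forall k, K k -> H (k *+ m).
Definition sq_bddd (K H : G -> Prop) := exists m, (0 < m)%N /\ sq_bounded m K H.
Definition sq_uniq_div (K H : G -> Prop) :=
  forall n, (0 < n)%N ->
    (forall k, K k -> exists k', K k' /\ H (k' *+ n - k)) /\
    (forall k1 k2, K k1 -> K k2 -> H (k1 *+ n - k2 *+ n) -> H (k1 - k2)).
(* K/H almost uniquely divisible: K/H = U/H (+) B/H (internal direct sum),
   U/H uniquely divisible, B/H bounded. *)
Definition sq_almost_ud (K H : G -> Prop) :=
  exists U B : G -> Prop,
    [/\ subgroup U /\ subgroup B,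
        (forall x, H x -> U x /\ B x) /\ (forall x, U x \/ B x -> K x),
        (forall k, K k -> exists u b, [/\ U u, B b & k = u + b]),
        (forall x, U x -> B x -> H x) &
        sq_uniq_div U H /\ sq_bddd B H].

(* the group G itself (= G/0) *)
Definition whole (x : G) := True.
Definition zero_sg (x : G) := x = 0.
End Subquotient.

(* Naturality of rho in the coefficients.

   Write K/H for ker rho = K/0 (K = ker_rho, H = 0) or for coker rho = K/H
   (K = lim (X /\ A), H = im rho).  Both K and H consist of functions with
   values in A, and both are stable under "combinations with endomorphism
   coefficients": if y1, y2 lie in K (resp. H) and phi1, phi2 are additive
   endomorphisms of A, then x |-> phi1 (y1 x) - phi2 (y2 x) lies in K (resp.
   H).  For ker rho and coker rho this holds because the finite sums defining
   rho and the maps f_* are additive in the coefficients (sum_over_combination).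
   Any such "endo-stable" subquotient inherits the three properties from A:
   - m A = 0 makes multiplication by m vanish pointwise;
   - for A uniquely divisible, division by n is an additive endomorphism;
   - for A = U (+) B, the projection pi onto U along B is an additive
     idempotent, and K/H splits as the parts on which pi_* resp. (1 - pi)_*
     act as the identity (fixpart), the first uniquely divisible and the
     second bounded. *)

From HB Require Import structures.
From mathcomp Require Import all_boot all_order all_algebra.
From mathcomp Require Import boolp classical_sets functions.
From Stdlib Require List.
Set Implicit Arguments. Unset Strict Implicit. Unset Printing Implicit Defensive.
Import GRing.Theory.
Local Open Scope ring_scope.

(* Finite sums of finitely supported functions.  The index type is arbitrary;
   its classical decidable equality {classic T} lets us use the seq library. *)
Section FinitelySupportedSums.
Variables (T : Type) (A : zmodType).
Implicit Types (f y : T -> A) (s : seq {classic T}).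

Lemma In_mem (x : {classic T}) s : List.In x s <-> x \in s.
Proof.
elim: s => [|t s IH] //=; rewrite in_cons; split.
- by case=> [->|/IH ->]; rewrite ?eqxx ?orbT.
- by case/orP=> [/eqP->|/IH]; [left|right].
Qed.

Lemma NoDup_uniq s : List.NoDup s <-> uniq s.
Proof.
elim: s => [|t s IH] /=; first by split=> // _; constructor.
rewrite List.NoDup_cons_iff IH; split.
- by case=> nts ->; rewrite andbT; apply/negP => /In_mem.
- by case/andP=> /negP nts ->; split=> // /In_mem.
Qed.

Lemma coversE f s :
  covers f s <-> uniq s /\ (forall t : {classic T}, f t != 0 -> t \in s).
Proof.
rewrite /covers NoDup_uniq; split=> -[us sup]; split=> // t /sup.
  by move/(In_mem (t : {classic T})).
by move/In_mem.
Qed.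

Lemma covers_undup f s :
  (forall t : {classic T}, f t != 0 -> t \in s) -> covers f (undup s).
Proof.
by move=> sup; apply/coversE; split=> [|t /sup]; rewrite ?undup_uniq ?mem_undup.
Qed.

Lemma fin_supp_covers f : fin_supp f -> exists s, covers f s.
Proof.
case=> s sup; exists (undup (s : seq {classic T})); apply: covers_undup => t /sup.
by move/In_mem.
Qed.

(* A sum over a cover of the support does not depend on the cover: both covers
   have the same nonzero entries, and zero entries do not contribute. *)
Lemma sum_covers_eq (P : pred T) f s1 s2 : covers f s1 -> covers f s2 ->
  \sum_(x <- s1 | P x) f x = \sum_(x <- s2 | P x) f x.
Proof.
have drop0 s : \sum_(x <- s | P x) f x =
    \sum_(x <- [seq x : {classic T} <- s | f x != 0] | P x) f x.
  rewrite big_filter_cond big_mkcondl; apply: eq_bigr => x _.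
  by case: eqVneq => [->|].
move=> /coversE[u1 sup1] /coversE[u2 sup2]; rewrite drop0 [RHS]drop0.
apply: perm_big; apply: uniq_perm; rewrite ?filter_uniq // => x.
by rewrite !mem_filter; apply/andb_id2l => /[dup] /sup1 -> /sup2 ->.
Qed.

Lemma sum_nonzero_witness (P : pred T) y s :
  \sum_(x <- s | P x) y x != 0 -> exists2 x, x \in s & P x.
Proof.
move=> nz; apply/hasP; apply: contraNT nz => /hasPn none.
by rewrite big1_seq // => x /andP[Px /none]; rewrite Px.
Qed.

Lemma sum_indicator (Q : pred T) s (q : {classic T}) (a : A) : uniq s -> q \in s ->
  \sum_(p <- s | Q p) (if `[< q = p >] then a else 0) = if Q q then a else 0.
Proof.
move=> us qs; rewrite (big_rem _ qs) /= (asboolT (erefl q)) big1_seq ?addr0 // => p.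
case/andP=> _ ps; case: asboolP => // qp.
by rewrite -qp mem_rem_uniqF in ps.
Qed.

(* a is the P-restricted sum of the finitely supported y, computed on any
   cover of its support (the shape of the formulas for rho and f_* ). *)
Definition sum_over (P : pred T) y (a : A) :=
  forall s : seq T, covers y s -> a = \sum_(x <- s | P x) y x.

Definition combination (phi1 phi2 : {additive A -> A}) y1 y2 (g : T -> A) :=
  forall x, g x = phi1 (y1 x) - phi2 (y2 x).


(* Stability under such combinations; it makes a subset an End(A)-submodule. *)
Definition comb_closed (P : (T -> A) -> Prop) :=
  forall phi1 phi2 y1 y2 g, P y1 -> P y2 -> combination phi1 phi2 y1 y2 g -> P g.

Lemma comb_closed_map P (phi : {additive A -> A}) y g :
  comb_closed P -> P y -> (forall x, g x = phi (y x)) -> P g.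
Proof. by move=> Pc Py gE; apply: (Pc phi \0 y y) => // x; rewrite gE /= subr0. Qed.

Lemma comb_closed_sub P y1 y2 g :
  comb_closed P -> P y1 -> P y2 -> (forall x, g x = y1 x - y2 x) -> P g.
Proof. by move=> Pc P1 P2; exact: (Pc idfun idfun y1 y2 g P1 P2). Qed.

Lemma comb_closed_add P y1 y2 g :
  comb_closed P -> P y1 -> P y2 -> (forall x, g x = y1 x + y2 x) -> P g.
Proof. by move=> Pc P1 P2 gE; apply: (Pc idfun -%R y1 y2) => // x; rewrite gE /= opprK. Qed.

Lemma combination_vanish phi1 phi2 y1 y2 g : combination phi1 phi2 y1 y2 g ->
  forall x, y1 x = 0 -> y2 x = 0 -> g x = 0.
Proof. by move=> gE x e1 e2; rewrite gE e1 e2 (raddf0 phi1) (raddf0 phi2) subr0. Qed.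

Lemma combination_support phi1 phi2 y1 y2 g : combination phi1 phi2 y1 y2 g ->
  forall x, g x != 0 -> y1 x != 0 \/ y2 x != 0.
Proof.
move=> gE x nz; have [e1|] := eqVneq (y1 x) 0; last by left.
have [e2|] := eqVneq (y2 x) 0; last by right.
by rewrite (combination_vanish gE e1 e2) eqxx in nz.
Qed.

Lemma fin_supp_combination phi1 phi2 y1 y2 g : combination phi1 phi2 y1 y2 g ->
  fin_supp y1 -> fin_supp y2 -> fin_supp g.
Proof.
move=> gE [s1 sup1] [s2 sup2]; exists (s1 ++ s2) => x.
by case/(combination_support gE) => [/sup1|/sup2] ?; apply: List.in_or_app; auto.
Qed.

Lemma sum_over_combination phi1 phi2 y1 y2 g (P : pred T) a1 a2 :
  combination phi1 phi2 y1 y2 g -> fin_supp y1 -> fin_supp y2 ->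
  sum_over P y1 a1 -> sum_over P y2 a2 -> sum_over P g (phi1 a1 - phi2 a2).
Proof.
move=> gE [s1 sup1] [s2 sup2] S1 S2.
pose c := undup (s1 ++ s2 : seq {classic T}).
have cov y : (forall x, y x != 0 -> y1 x != 0 \/ y2 x != 0) -> covers y c.
  move=> sup; apply: covers_undup => x /sup.
  by case=> [/sup1|/sup2] /In_mem; rewrite mem_cat => ->; rewrite ?orbT.
move=> s cs; rewrite (sum_covers_eq _ cs (cov g (combination_support gE))).
rewrite (S1 c (cov y1 (fun x nz => or_introl nz))).
rewrite (S2 c (cov y2 (fun x nz => or_intror nz))).
by rewrite (eq_bigr _ (fun x _ => gE x)) sumrB !raddf_sum.
Qed.
End FinitelySupportedSums.
Arguments comb_closed_map {T A P} phi {y g}.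

Definition push_on (T T' : Type) (A : zmodType) (D : T' -> Prop) (g : T -> T')
    (y : T -> A) (z : T' -> A) :=
  forall p, D p -> sum_over (fun x => `[< g x = p >]) y (z p).

Section Pushforward.
Variables (T T' T'' : Type) (A : zmodType).

Lemma push_on_covers (D : T' -> Prop) (g : T -> T') (y : T -> A) z (t : seq {classic T}) :
  push_on D g y z -> (forall p, ~ D p -> z p = 0) -> covers y t ->
  covers z (undup [seq (g x : {classic T'}) | x : {classic T} <- t]).
Proof.
move=> zE z0 ct; apply: covers_undup => p nzp.
have Dp : D p by apply: contrapT => nDp; rewrite z0 ?eqxx in nzp.
move: nzp; rewrite (zE p Dp t ct) => /(sum_nonzero_witness (s := t : seq {classic T})).
by case=> x xt /asboolP gxp; apply/mapP; exists x.
Qed.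

Lemma push_on_comp (D : T' -> Prop) (D' : T'' -> Prop) (g : T -> T')
    (h : T' -> T'') (k : T -> T'') (y : T -> A) z v :
  fin_supp y -> push_on D g y z -> (forall p, ~ D p -> z p = 0) ->
  (forall p, ~ D p -> ~ D' (h p)) -> (forall x, y x != 0 -> h (g x) = k x) ->
  push_on D' k y v -> push_on D' h z v.
Proof.
move=> fy zE z0 hD hgk vE p' D'p' s cs.
have [t ct] := fin_supp_covers fy.
rewrite (vE p' D'p' t ct) (sum_covers_eq _ cs (push_on_covers zE z0 ct)).
set c := undup _.
have [_ supp_t] := (coversE y t).1 ct.
transitivity (\sum_(x <- t)
    \sum_(p <- c | `[< h p = p' >]) (if `[< g x = p >] then y x else 0)).
  rewrite big_mkcond; apply: eq_bigr => x _.
  have [->|nz] := eqVneq (y x) 0.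
    by rewrite if_same big1 // => p _; rewrite if_same.
  have gxc : (g x : {classic T'}) \in c by rewrite mem_undup map_f ?supp_t.
  by rewrite sum_indicator ?undup_uniq // hgk.
rewrite exchange_big /=; apply: eq_bigr => p /asboolP hp.
have Dp : D p by apply: contrapT => nDp; apply: (hD p nDp); rewrite hp.
by rewrite (zE p Dp t ct) -big_mkcond.
Qed.
End Pushforward.

Section RhoNaturality.
Variables (C : category) (X : pdiagram C) (A : zmodType).
Implicit Types (u : lfamily X -> A) (w : fam_smash X A).

Lemma limsmash_comb : comb_closed (@limsmash C X A).
Proof.
move=> phi1 phi2 u1 u2 g [b1 c1 f1] [b2 c2 f2] gE; split.
- exact: combination_vanish gE b1 b2.
- by move=> x /(combination_support gE) [/c1|/c2].
- exact: fin_supp_combination gE f1 f2.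
Qed.

Lemma rho_graph_comb phi1 phi2 u1 u2 g w1 w2 h :
  combination phi1 phi2 u1 u2 g -> combination phi1 phi2 w1 w2 h ->
  limsmash u1 -> limsmash u2 -> rho_graph u1 w1 -> rho_graph u2 w2 -> rho_graph g h.
Proof.
move=> gE hE [_ _ f1] [_ _ f2] r1 r2 d.
have [p1 R1] := r1 d; have [p2 R2] := r2 d; split.
  by apply: (combination_vanish hE); [exact: p1 | exact: p2].
move=> p pp; rewrite hE.
exact: (sum_over_combination gE f1 f2 (R1 p pp) (R2 p pp)).
Qed.

Lemma limXA_comb : comb_closed (@limXA C X A).
Proof.
move=> phi1 phi2 w1 w2 h [L1 P1] [L2 P2] hE.
have comp_comb d : combination phi1 phi2
    (fun p => w1 (existT _ d p)) (fun p => w2 (existT _ d p)) (fun p => h (existT _ d p)).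
  by move=> p; apply: hE.
split=> [d | d d' f].
  have [p1 f1] := L1 d; have [p2 f2] := L2 d.
  split; last exact: fin_supp_combination (comp_comb d) f1 f2.
  by apply: (combination_vanish hE); [exact: p1 | exact: p2].
have [_ f1] := L1 d; have [_ f2] := L2 d.
have [p1 R1] := P1 d d' f; have [p2 R2] := P2 d d' f; split.
  by apply: (combination_vanish hE); [exact: p1 | exact: p2].
move=> p' pp'; rewrite /comp_d hE.
exact: (sum_over_combination (comp_comb d) f1 f2 (R1 p' pp') (R2 p' pp')).
Qed.

Lemma ker_rho_comb : comb_closed (@ker_rho C X A).
Proof.
move=> phi1 phi2 u1 u2 g [l1 r1] [l2 r2] gE; split.
  exact: limsmash_comb l1 l2 gE.
apply: rho_graph_comb gE _ l1 l2 r1 r2 => z.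
by rewrite (raddf0 phi1) (raddf0 phi2) subr0.
Qed.

Lemma im_rho_comb : comb_closed (@im_rho C X A).
Proof.
move=> phi1 phi2 w1 w2 h [u1 [l1 r1]] [u2 [l2 r2]] hE.
exists (fun x => phi1 (u1 x) - phi2 (u2 x)).
have gE : combination phi1 phi2 u1 u2 (fun x => phi1 (u1 x) - phi2 (u2 x)) by [].
by split; [exact: limsmash_comb l1 l2 gE | exact: rho_graph_comb gE hE l1 l2 r1 r2].
Qed.

Lemma rho_graph_zero : rho_graph (fun _ : lfamily X => 0 : A) (fun _ => 0).
Proof. by move=> d; split=> // p _ s _; rewrite big1. Qed.

Lemma limsmash_zero : limsmash (fun _ : lfamily X => 0 : A).
Proof. by split=> //; [move=> x | exists [::] => x]; rewrite eqxx. Qed.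

Lemma ker_rho_zero : ker_rho (fun _ : lfamily X => 0 : A).
Proof. exact: conj limsmash_zero rho_graph_zero. Qed.

Lemma im_rho_zero : im_rho (fun _ : {d & X d} => 0 : A).
Proof. by exists (fun _ => 0); split; [exact: limsmash_zero | exact: rho_graph_zero]. Qed.

(* rho lands in lim (X /\ A): f_* rho(u)_d = rho(u)_d' because f_* (ev_d)_* u
   = (f o ev_d)_* u = (ev_d')_* u, u being supported on compatible families. *)
Lemma im_rho_limXA w : im_rho w -> limXA w.
Proof.
case=> u [[_ u_compat fu] rho_uw].
have [t ct] := fin_supp_covers fu.
have push_d d : push_on (fun p => p <> pt X d) (fun x : lfamily X => x d) u
    (fun p => w (existT _ d p)) by case: (rho_uw d).
have vanish_d d p : ~ p <> pt X d -> w (existT _ d p) = 0.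
  by move=> /contrapT ->; case: (rho_uw d).
split=> [d | d d' f]; split; first by case: (rho_uw d).
- have [_ sup] := push_on_covers (push_d d) (vanish_d d) ct.
  by eexists; exact: sup.
- by case: (rho_uw d').
apply: (push_on_comp fu (push_d d) (vanish_d d) _ _ (push_d d')).
  by move=> p /contrapT ->; rewrite fmap_pt; apply.
by move=> x /u_compat.
Qed.
End RhoNaturality.

Section CoefficientGroup.
Variable A : zmodType.
Implicit Types (U B : A -> Prop).

Definition additive_of (f : A -> A) (fB : zmod_morphism f) : {additive A -> A} :=
  HB.pack_for {additive A -> A} f (GRing.isZmodMorphism.Build A A f fB).

Definition natmul_additive (n : nat) : {additive A -> A} := additive_of (@mulrnBl A n).

Lemma subr_interchange (a b c d : A) : (a - b) - (c - d) = (a - c) - (b - d).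
Proof. by rewrite !opprB addrACA [RHS]addrACA [- b - c]addrC. Qed.

Lemma direct_sum_unique U B c u u' : subgroup U -> subgroup B ->
  (forall a, U a -> B a -> a = 0) -> U u -> B (c - u) -> U u' -> B (c - u') -> u = u'.
Proof.
move=> [_ Usub] [_ Bsub] disj Uu Bcu Uu' Bcu'.
apply/subr0_eq/disj; first exact: Usub.
by rewrite -[u - u'](subrKA c) addrC -opprB; apply: Bsub.
Qed.

Lemma direct_sum_projection U B : subgroup U -> subgroup B ->
  (forall a, exists u b, [/\ U u, B b & a = u + b]) -> (forall a, U a -> B a -> a = 0) ->
  exists pi : {additive A -> A},
    [/\ forall a, U (pi a), forall a, B (a - pi a) & forall u, U u -> pi u = u].
Proof.
move=> sU sB dec disj; have uniq := direct_sum_unique sU sB disj.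
have [pi piP] : {p : A -> A & forall a, U (p a) /\ B (a - p a)}.
  apply: (@choice _ _ (fun a p => U p /\ B (a - p))) => a.
  have [u [b [Uu Bb ->]]] := dec a.
  by exists u; rewrite addrC addKr.
have pi_morph : zmod_morphism pi.
  move=> a b; have [Ua Ba] := piP a; have [Ub Bb] := piP b; have [Uab Bab] := piP (a - b).
  apply: (uniq (a - b)) Uab Bab _ _; first by case: sU => _; apply.
  by rewrite subr_interchange; case: sB => _; apply.
exists (additive_of pi_morph); split=> [a|a|u Uu]; [exact: (piP a).1 | exact: (piP a).2 |].
have [Upi Bpi] := piP u; apply: uniq Upi Bpi Uu _.
by rewrite subrr; case: sB.
Qed.

Lemma division_map U (pi : {additive A -> A}) n : (0 < n)%N -> subgroup U ->
  sq_uniq_div U (@zero_sg A) -> (forall a, U (pi a)) ->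
  exists phi : {additive A -> A},
    [/\ forall a, U (phi a), forall a, phi a *+ n = pi a & forall a, phi (a *+ n) = pi a].
Proof.
move=> n0 sU /(_ n n0) [div_surj div_inj] Upi.
have inj u v : U u -> U v -> u *+ n = v *+ n -> u = v.
  by move=> Uu Uv e; apply/subr0_eq/div_inj => //; rewrite /zero_sg e subrr.
have [dv dvP] : {dv : A -> A & forall a, U a -> U (dv a) /\ dv a *+ n = a}.
  apply: (@choice _ _ (fun a d => U a -> U d /\ d *+ n = a)) => a.
  case: (pselect (U a)) => [Ua|nUa]; last by exists a.
  have [a' [Ua' e]] := div_surj a Ua.
  by exists a' => _; split=> //; apply/subr0_eq.
have Uphi a : U (dv (pi a)) by case: (dvP _ (Upi a)).
have phiE a : dv (pi a) *+ n = pi a by case: (dvP _ (Upi a)).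
have phi_morph : zmod_morphism (fun a => dv (pi a)).
  move=> a b; apply: inj; [exact: Uphi | by case: sU => _; apply; exact: Uphi |].
  by rewrite mulrnBl !phiE raddfB.
exists (additive_of phi_morph); split=> // a.
by apply: inj; [exact: Uphi | exact: Upi | rewrite /= phiE !raddfMn].
Qed.
End CoefficientGroup.

Section EndoStableSubquotients.
Variables (T : Type) (A : zmodType).
Implicit Types (K H : (T -> A) -> Prop) (k : T -> A) (pi rho : {additive A -> A}).

Definition endo_stable K H :=
  [/\ comb_closed K, comb_closed H, (forall k, H k -> K k) & H 0].

Section Fixpart.
Variables (K H : (T -> A) -> Prop).
(* Keep the combination coefficients of these hypotheses explicit. *)
Unset Implicit Arguments.
Hypotheses (K_comb : comb_closed K) (H_comb : comb_closed H).
Set Implicit Arguments.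
Hypotheses (H_sub_K : forall k, H k -> K k) (H_zero : H 0).

Lemma H_pointwise_zero k : (forall x, k x = 0) -> H k.
Proof. by move=> k0; have -> : k = 0 by apply/funext. Qed.

Definition fixpart (pi : {additive A -> A}) k := K k /\ H (fun x => k x - pi (k x)).

Lemma fixpart_of_H pi k : H k -> fixpart pi k.
Proof. by move=> Hk; split; [exact: H_sub_K | apply: (H_comb idfun pi k k _ Hk Hk)]. Qed.

Lemma fixpart_subgroup pi : subgroup (fixpart pi).
Proof.
split=> [|k1 k2 [K1 H1] [K2 H2]]; first exact: fixpart_of_H.
split; first exact: (comb_closed_sub K_comb K1 K2).
by apply: comb_closed_sub H_comb H1 H2 _ => x /=; rewrite raddfB subr_interchange.
Qed.

Lemma fixpart_id k : fixpart idfun k <-> K k.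
Proof.
split=> [[]//|Kk]; split=> //.
by apply: H_pointwise_zero => x; exact: subrr.
Qed.

Lemma fixpart_image pi k :
  (forall a, pi (pi a) = pi a) -> K k -> fixpart pi (fun x => pi (k x)).
Proof.
move=> pi_idem Kk; split; first exact: (comb_closed_map pi K_comb Kk).
by apply: H_pointwise_zero => x; rewrite pi_idem subrr.
Qed.

Lemma fixpart_inter pi rho k : (forall a, pi a + rho a = a) ->
  fixpart pi k -> fixpart rho k -> H k.
Proof.
move=> pi_rho [_ Hpi] [_ Hrho]; apply: comb_closed_add H_comb Hpi Hrho _ => x.
set a := k x.
have -> : a - pi a = rho a by rewrite -{1}(pi_rho a) addrC addKr.
by rewrite addrC addrNK.
Qed.

Lemma fixpart_bounded (B : A -> Prop) m pi : (forall a, B (pi a)) ->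
  sq_bounded m B (@zero_sg A) -> sq_bounded m (fixpart pi) H.
Proof.
move=> Bpi bddB k [_ Hk]; apply: (comb_closed_map (natmul_additive A m) H_comb Hk) => x.
by rewrite natmulfctE /= mulrnBl (bddB _ (Bpi (k x))) subr0.
Qed.

(* If pi is a projection onto a uniquely divisible U, the fixed part of pi_*
   is uniquely divisible: divide pointwise by the division map of U. *)
Lemma fixpart_uniq_div (U : A -> Prop) pi : subgroup U -> sq_uniq_div U (@zero_sg A) ->
  (forall a, U (pi a)) -> (forall u, U u -> pi u = u) -> sq_uniq_div (fixpart pi) H.
Proof.
move=> sU udU Upi pi_fix n n0.
have [phi [Uphi phiE phinE]] := division_map n0 sU udU Upi.
split=> [k [Kk Hk] | k1 k2 [_ H1] [_ H2] Hn].
  exists (fun x => phi (k x)); split.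
    split; first exact: (comb_closed_map phi K_comb Kk).
    by apply: H_pointwise_zero => x; rewrite pi_fix ?subrr.
  apply: (comb_closed_map -%R H_comb Hk) => x.
  by rewrite natmulfctE !fctE /= phiE opprB.
have HU : H (fun x => pi (k1 x) - pi (k2 x)).
  by apply: (comb_closed_map phi H_comb Hn) => x; rewrite !natmulfctE /= raddfB !phinE.
have HB : H (fun x => (k1 x - pi (k1 x)) - (k2 x - pi (k2 x))).
  exact: (comb_closed_sub H_comb H1 H2).
apply: (comb_closed_add H_comb HU HB) => x; rewrite !fctE.
by rewrite -subr_interchange [RHS]addrC addrNK.
Qed.

Lemma bounded_transfer m : sq_bounded m (@whole A) (@zero_sg A) -> sq_bounded m K H.
Proof.
move=> bddA k _; apply: H_pointwise_zero => x.
by rewrite natmulfctE; exact: bddA.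
Qed.

Lemma uniq_div_transfer : sq_uniq_div (@whole A) (@zero_sg A) -> sq_uniq_div K H.
Proof.
move=> udA n n0; have sA : subgroup (@whole A) by [].
have [surj inj] := fixpart_uniq_div sA udA (pi := idfun) (fun _ => I) (fun _ _ => erefl) n0.
split=> [k Kk | k1 k2 K1 K2].
  by have [k' [[Kk' _] Hk']] := surj k ((fixpart_id k).2 Kk); exists k'.
by apply: inj; exact/fixpart_id.
Qed.

Lemma almost_ud_transfer : sq_almost_ud (@whole A) (@zero_sg A) -> sq_almost_ud K H.
Proof.
case=> U [B [[sU sB] _ dec disj [udU bddB]]].
have [pi [Upi Bpi pi_fix]] := direct_sum_projection sU sB (fun a => dec a I) disj.
pose rho : {additive A -> A} := idfun \- pi.
have pi_rho a : pi a + rho a = a by rewrite /= addrC addrNK.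
have pi_idem a : pi (pi a) = pi a by exact: pi_fix.
have rho_idem a : rho (rho a) = rho a by rewrite /= raddfB pi_idem subrr subr0.
exists (fixpart pi), (fixpart rho); split.
- by split; exact: fixpart_subgroup.
- split=> [x Hx | x [[Kx _]|[Kx _]] //].
  by split; exact: fixpart_of_H.
- move=> k Kk; exists (fun x => pi (k x)), (fun x => rho (k x)).
  split; [exact: fixpart_image pi_idem Kk | exact: fixpart_image rho_idem Kk |].
  by apply/funext => x; rewrite addrfctE /= pi_rho.
- by move=> x; exact: fixpart_inter pi_rho.
split; first exact: fixpart_uniq_div sU udU Upi pi_fix.
have [m [m0 bddm]] := bddB; exists m; split=> //.
exact: (fixpart_bounded (pi := rho) Bpi bddm).
Qed.
End Fixpart.

Lemma endo_stable_transfer K H : endo_stable K H ->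
  [/\ forall m, sq_bounded m (@whole A) (@zero_sg A) -> sq_bounded m K H,
      sq_uniq_div (@whole A) (@zero_sg A) -> sq_uniq_div K H
    & sq_almost_ud (@whole A) (@zero_sg A) -> sq_almost_ud K H].
Proof.
case=> K_comb H_comb H_sub_K H_zero; split.
- exact: bounded_transfer.
- exact: uniq_div_transfer.
- exact: almost_ud_transfer.
Qed.
End EndoStableSubquotients.

Lemma zero_sg_comb (T : Type) (A : zmodType) : comb_closed (@zero_sg (T -> A)).
Proof.
move=> phi1 phi2 y1 y2 g -> -> gE; apply/funext => x.
exact: (combination_vanish gE).
Qed.

Section RhoSubquotients.
Variables (C : category) (X : pdiagram C) (A : zmodType).

Lemma ker_rho_endo_stable :
  endo_stable (@ker_rho C X A) (@zero_sg (lfamily X -> A)).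
Proof.
split; [exact: ker_rho_comb | exact: zero_sg_comb | | by []].
by move=> k ->; exact: ker_rho_zero.
Qed.

Lemma coker_rho_endo_stable : endo_stable (@limXA C X A) (@im_rho C X A).
Proof.
split; [exact: limXA_comb | exact: im_rho_comb | exact: im_rho_limXA | exact: im_rho_zero].
Qed.
End RhoSubquotients.

Theorem mainTheorem6 (C : category) (X : pdiagram C) (A : zmodType) :
  (* (1) *)
  (forall m : nat, sq_bounded m (@whole A) (@zero_sg A) ->
     sq_bounded m (@ker_rho C X A) (@zero_sg (@lfamily C X -> A)) /\
     sq_bounded m (@limXA C X A) (@im_rho C X A)) /\
  (* (2) *)
  (sq_uniq_div (@whole A) (@zero_sg A) ->
     sq_uniq_div (@ker_rho C X A) (@zero_sg (@lfamily C X -> A)) /\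
     sq_uniq_div (@limXA C X A) (@im_rho C X A)) /\
  (* (3) *)
  (sq_almost_ud (@whole A) (@zero_sg A) ->
     sq_almost_ud (@ker_rho C X A) (@zero_sg (@lfamily C X -> A)) /\
     sq_almost_ud (@limXA C X A) (@im_rho C X A)).
Proof.
have [ker_bdd ker_ud ker_aud] := endo_stable_transfer (ker_rho_endo_stable X A).
have [cok_bdd cok_ud cok_aud] := endo_stable_transfer (coker_rho_endo_stable X A).
split; last split.
- by move=> m bddA; split; [exact: ker_bdd | exact: cok_bdd].
- by move=> udA; split; [exact: ker_ud | exact: cok_ud].
- by move=> audA; split; [exact: ker_aud | exact: cok_aud].
Qed.
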